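(* For every natural number $n\geq 2$, the $n$-Split Interval $S_n(I)$ is a compact Hausdorff space.
   Context: Let $I=[0,1]$. For $n\geq 2$, $S_n(I)$ is the set $I\times\{0,\ldots,n-1\}$ with the topology in which the points $(x,i)$ with $i\in\{2,\ldots,n-1\}$ are isolated, a point $(x,0)$ with $x>0$ has basic neighbourhoods $\{(x,0)\}\cup\{(y,i): z_0<y<x,\ i\in\{0,\ldots,n-1\}\}$ for $z_0\in I$, $z_0<x$, a point $(x,1)$ with $x<1$ has basic neighbourhoods $\{(x,1)\}\cup\{(y,i): x<y<z_1,\ i\in\{0,\ldots,n-1\}\}$ for $z_1\in I$, $z_1>x$, and the points $(0,0)$ and $(1,1)$ are isolated. *)

From HB Require Import structures.
From mathcomp Require Import all_boot all_order all_algebra.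
From mathcomp Require Import all_classical all_reals.
From mathcomp Require Import topology.
Set Implicit Arguments. Unset Strict Implicit. Unset Printing Implicit Defensive.
Import Order.TTheory GRing.Theory Num.Theory.
Local Open Scope classical_set_scope.
Local Open Scope ring_scope.

Definition unitI (R : realType) : Type := {x : R | 0 <= x <= 1}.

Definition splitI (R : realType) (n : nat) : Type := (unitI R * 'I_n)%type.
HB.instance Definition _ (R : realType) (n : nat) := Choice.on (splitI R n).

Definition split_basic (R : realType) (n : nat) (U : set (splitI R n)) : Prop :=
  exists (x : unitI R) (i : 'I_n),
       ((2 <= val i)%N /\ U = [set (x, i)])
    \/ (val i = 0%N /\ val x = 0 /\ U = [set (x, i)])
    \/ (val i = 0%N /\ 0 < val x /\
         exists z0 : unitI R, val z0 < val x /\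
           U = [set (x, i)] `|` [set q | val z0 < val q.1 < val x])
    \/ (val i = 1%N /\ val x = 1 /\ U = [set (x, i)])
    \/ (val i = 1%N /\ val x < 1 /\
         exists z1 : unitI R, val x < val z1 /\
           U = [set (x, i)] `|` [set q | val x < val q.1 < val z1]).

HB.instance Definition _ (R : realType) (n : nat) :=
  isSubBaseTopological.Build (splitI R n) (@split_basic R n) id.

From HB Require Import structures.
From mathcomp Require Import all_boot all_order all_algebra.
From mathcomp Require Import all_classical all_reals.
From mathcomp Require Import topology normedtype.
From mathcomp Require Import lra.
Set Implicit Arguments. Unset Strict Implicit. Unset Printing Implicit Defensive.
Import Order.TTheory GRing.Theory Num.Theory numFieldNormedType.Exports.
Local Open Scope classical_set_scope.
Local Open Scope ring_scope.

(* Two distinct points over different abscissae have basic neighbourhoods in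
   disjoint vertical strips.  Over the same abscissa x, a basic neighbourhood
   of (x, i) adds to the point only abscissae < x if i = 0, only abscissae > x
   if i = 1, and nothing if i >= 2, so two different levels are again separated.
   For compactness, take an ultrafilter U: its projection on [0, 1] converges
   to some x.  If U contains the points with abscissa < x it converges to
   (x, 0); if it contains those with abscissa > x it converges to (x, 1);
   otherwise it lives on the finite fibre over x and is principal. *)

Lemma ultra_cluster_cvg (T : Type) (X : topologicalType) (U : set_system T)
    (f : T -> X) (x : X) :
  UltraFilter U -> cluster (f @ U) x -> f @ U --> x.
Proof.
move=> UU clx A Ax; case: (in_ultra_setVsetC (f @^-1` A) UU) => // UnA.
by have [y []] := clx (~` A) A UnA Ax.
Qed.

Lemma ultra_cvg_itv (R : realType) (T : Type) (U : set_system T) (f : T -> R)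
    (a b : R) :
  UltraFilter U -> (forall t, a <= f t <= b) -> exists2 x : R, a <= x <= b & f @ U --> x.
Proof.
move=> UU fab; have Uab : U (f @^-1` `[a, b]%classic).
  by apply: filterS filterT => t _; rewrite /= in_itv /=; exact: fab.
have [x [xab clx]] := @segment_compact R a b (f @ U) _ Uab.
by exists x; [move: xab; rewrite /= in_itv | exact: ultra_cluster_cvg].
Qed.

Lemma ultra_fiber (T : Type) (I : finType) (f : T -> I) (U : set_system T) :
  UltraFilter U -> exists i, U (f @^-1` [set i]).
Proof.
move=> UU; suff /(_ (enum I)) : forall s : seq I,
    U [set t | f t \in s] -> exists i, U (f @^-1` [set i]).
  by apply; apply: filterS filterT => t _; rewrite /= mem_enum.
elim => [|j s IHs] Us; first by have [t] := filter_ex Us.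
case: (in_ultra_setVsetC (f @^-1` [set j]) UU) => [|Unj]; first by exists j.
apply: IHs; apply: filterS (filterI Us Unj) => t [] /=.
by rewrite in_cons => /orP[/eqP|].
Qed.

Lemma cvg_set1 (T : topologicalType) (F : set_system T) (p : T) :
  Filter F -> F [set p] -> F --> p.
Proof. by move=> FF Fp A /nbhs_singleton Ap; apply: filterS Fp => q ->. Qed.

Lemma ltr_pm1 (R : realDomainType) (r : R) : r - 1 < r < r + 1.
Proof. by apply/andP; split; lra. Qed.

Section SplitInterval.
Variables (R : realType) (n : nat).
Implicit Types (p q r : splitI R n) (B : set (splitI R n)).

Lemma clampI_subproof (r : R) : 0 <= Num.max 0 (Num.min r 1) <= 1.
Proof. by rewrite le_max lexx ge_max ler01 ge_min lexx orbT. Qed.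

Definition clampI (r : R) : unitI R := exist _ (Num.max 0 (Num.min r 1)) (clampI_subproof r).

(* Every basic neighbourhood of [p] is contained in [[set p] `|` split_side p]. *)
Definition split_side p : set (splitI R n) :=
  [set q | (val p.2 == 0%N) && (val q.1 < val p.1)
        || (val p.2 == 1%N) && (val p.1 < val q.1)].

Lemma split_sideP p r : split_side p r ->
  (val p.2 = 0%N /\ val r.1 < val p.1) \/ (val p.2 = 1%N /\ val p.1 < val r.1).
Proof. by case/orP => /andP[/eqP e h]; [left | right]. Qed.

Lemma split_basic_strip p (a b : R) : a < val p.1 < b ->
  exists B, [/\ split_basic B, B p, B `<=` [set q | a < val q.1 < b]
              & B `<=` [set p] `|` split_side p].
Proof.
case: p => x i /= /andP[ax xb]; have /andP[x0 x1] := valP x.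
have singleton : split_basic [set (x, i)] -> exists B, [/\ split_basic B, B (x, i),
    B `<=` [set q | a < val q.1 < b] & B `<=` [set (x, i)] `|` split_side (x, i)].
  by exists [set (x, i)]; split => // q ->; rewrite /= ax xb.
case: i => -[|[|k]] hk in singleton *.
- have [xz|x_gt0] := eqVneq (val x) 0.
    by apply: singleton; exists x, (Ordinal hk); right; left.
  have {}x_gt0 : 0 < val x by rewrite lt_neqAle eq_sym x_gt0 x0.
  have a1 : a <= 1 by apply: ltW; apply: lt_le_trans x1.
  have z0x : val (clampI a) < val x.
    by rewrite /= gt_max x_gt0 gt_min ax.
  have az0 : a <= val (clampI a) by rewrite /= le_max le_min lexx a1 orbT.
  exists ([set (x, Ordinal hk)] `|` [set q | val (clampI a) < val q.1 < val x]).
  split; [|by left|..].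
  + by exists x, (Ordinal hk); right; right; left; split; [|split; [|exists (clampI a)]].
  + move=> q [->|/andP[zq qx]]; first by rewrite /= ax xb.
    by rewrite /= (le_lt_trans az0 zq) (lt_trans qx xb).
  + by move=> q [->|/andP[_ qx]]; [left | right; rewrite /split_side /= qx].
- have [xz|x_lt1] := eqVneq (val x) 1.
    by apply: singleton; exists x, (Ordinal hk); right; right; right; left.
  have {}x_lt1 : val x < 1 by rewrite lt_neqAle x_lt1 x1.
  have b0 : 0 <= b by apply: ltW; apply: le_lt_trans xb.
  have xz1 : val x < val (clampI b).
    by rewrite /= lt_max lt_min xb x_lt1 orbT.
  have z1b : val (clampI b) <= b by rewrite /= ge_max b0 ge_min lexx.
  exists ([set (x, Ordinal hk)] `|` [set q | val x < val q.1 < val (clampI b)]).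
  split; [|by left|..].
  + by exists x, (Ordinal hk); right; right; right; right; split; [|split; [|exists (clampI b)]].
  + move=> q [->|/andP[xq qz]]; first by rewrite /= ax xb.
    by rewrite /= (lt_trans ax xq) (lt_le_trans qz z1b).
  + by move=> q [->|/andP[xq _]]; [left | right; rewrite /split_side /= xq].
- by apply: singleton; exists x, (Ordinal hk); left.
Qed.

Lemma split_basic_open B : split_basic B -> open B.
Proof.
move=> bB; exists [set B]; last by rewrite bigcup_set1.
by move=> _ ->; exact: finI_from1.
Qed.

Lemma split_basic_separate p q : p != q -> exists A B,
  [/\ split_basic A, split_basic B, A p, B q & A `&` B `<=` set0].
Proof.
wlog le_pq : p q / val p.1 <= val q.1 => [hwlog|].
  have [/hwlog//|/ltW/hwlog] := leP (val p.1) (val q.1).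
  rewrite eq_sym => /[apply] -[A [B [bA bB Aq Bp AB0]]].
  by exists B, A; split => //; rewrite setIC.
move=> pq; case: ltgtP le_pq => // [lt_pq|eq_pq] _.
  pose c := (val p.1 + val q.1) / 2; have [pc cq] := midf_lt lt_pq.
  have /andP[p_gt _] := ltr_pm1 (val p.1); have /andP[_ q_lt] := ltr_pm1 (val q.1).
  have p_in : val p.1 - 1 < val p.1 < c by rewrite p_gt pc.
  have q_in : c < val q.1 < val q.1 + 1 by rewrite cq q_lt.
  have [A [bA Ap sA _]] := split_basic_strip p_in.
  have [B [bB Bq sB _]] := split_basic_strip q_in.
  exists A, B; split => // r [/sA/andP[_ rc] /sB/andP[cr _]].
  by have := lt_trans rc cr; rewrite ltxx.
have [A [bA Ap _ sA]] := split_basic_strip (ltr_pm1 (val p.1)).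
have [B [bB Bq _ sB]] := split_basic_strip (ltr_pm1 (val q.1)).
exists A, B; split => // r [/sA rA /sB rB].
have p2q2 : val p.2 != val q.2.
  apply: contra pq => /eqP/val_inj e2.
  by rewrite [p]surjective_pairing [q]surjective_pairing e2 (val_inj eq_pq).
case: rA rB => [rp|rA] [rq|rB]; first by rewrite -rp -rq eqxx in pq.
- by move: rB; rewrite rp /split_side /= eq_pq ltxx !andbF.
- by move: rA; rewrite rq /split_side /= eq_pq ltxx !andbF.
move: p2q2; case/split_sideP: rA => -[-> rp]; case/split_sideP: rB => -[-> rq] //= _.
- by rewrite -eq_pq in rq; have := lt_trans rp rq; rewrite ltxx.
- by rewrite -eq_pq in rq; have := lt_trans rq rp; rewrite ltxx.
Qed.

Lemma split_hausdorff : hausdorff_space (splitI R n).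
Proof.
move=> p q clpq; apply/eqP/negPn/negP => /split_basic_separate[A [B [bA bB Ap Bq AB0]]].
have [r ABr] := clpq A B (open_nbhs_nbhs (conj (split_basic_open bA) Ap))
  (open_nbhs_nbhs (conj (split_basic_open bB) Bq)).
exact: AB0 ABr.
Qed.

Lemma cvg_split_basic (F : set_system (splitI R n)) p : Filter F ->
  (forall B, split_basic B -> B p -> F B) -> F --> p.
Proof.
move=> FF Fbasic A [B [[D Dfin DB] Bp BA]]; apply: filterS BA _.
have [C DC Cp] : (\bigcup_(C in D) C) p by rewrite DB.
apply: filterS (_ : C `<=` B) _; first by rewrite -DB => y Cy; exists C.
have [E Ebasic EC] := Dfin C DC; rewrite -EC in Cp *.
by apply: filter_bigI => i iE; apply: Fbasic; [exact/set_mem/Ebasic | exact: Cp].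
Qed.

Lemma split_basic_left B p : split_basic B -> B p -> val p.2 = 0%N ->
  exists2 c, c < val p.1 & [set q | c < val q.1 < val p.1] `<=` B.
Proof.
move=> [y [j [[j2 ->]|[[_ [y0 ->]]|[[_ [_ [z0 [z0y ->]]]]|[[j1 [_ ->]]|
  [j1 [_ [z1 [_ ->]]]]]]]]]] Bp p0; rewrite ?Bp in p0 *.
- by rewrite p0 in j2.
- exists (-1); first by rewrite /= y0 ltrN10.
  move=> q /andP[_ qy]; have /andP[q0 _] := valP q.1.
  by have := le_lt_trans q0 qy; rewrite /= y0 ltxx.
- case: Bp => [Bp|/andP[z0p py]]; rewrite ?Bp in p0 *.
    by exists (val z0) => // q qB; right.
  by exists (val z0) => // q /andP[z0q qp]; right; rewrite /= z0q (lt_trans qp py).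
- by rewrite p0 in j1.
- case: Bp => [Bp|/andP[yp pz1]]; first by rewrite Bp j1 in p0.
  by exists (val y) => // q /andP[yq qp]; right; rewrite /= yq (lt_trans qp pz1).
Qed.

Lemma split_basic_right B p : split_basic B -> B p -> val p.2 = 1%N ->
  exists2 c, val p.1 < c & [set q | val p.1 < val q.1 < c] `<=` B.
Proof.
move=> [y [j [[j2 ->]|[[j0 [_ ->]]|[[j0 [_ [z0 [_ ->]]]]|[[_ [y1 ->]]|
  [_ [_ [z1 [yz1 ->]]]]]]]]]] Bp p1; rewrite ?Bp in p1 *.
- by rewrite p1 in j2.
- by rewrite p1 in j0.
- case: Bp => [Bp|/andP[z0p py]]; first by rewrite Bp j0 in p1.
  by exists (val y) => // q /andP[pq qy]; right; rewrite /= qy (lt_trans z0p pq).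
- exists 2; first by rewrite /= y1 ltr1n.
  move=> q /andP[yq _]; have /andP[_ q1] := valP q.1.
  by have := lt_le_trans yq q1; rewrite /= y1 ltxx.
- case: Bp => [Bp|/andP[yp pz1]]; rewrite ?Bp in p1 *.
    by exists (val z1) => // q qB; right.
  by exists (val z1) => // q /andP[pq qz1]; right; rewrite /= qz1 (lt_trans yp pq).
Qed.

Lemma cvg_split_left (F : set_system (splitI R n)) (x : unitI R) (i : 'I_n) :
  Filter F -> val i = 0%N ->
  (forall c, c < val x -> F [set q | c < val q.1 < val x]) -> F --> ((x, i) : splitI R n).
Proof.
move=> FF i0 Fx; apply: cvg_split_basic => B bB Bp.
by have [c cx /filterS] := split_basic_left bB Bp i0; apply; exact: Fx.
Qed.

Lemma cvg_split_right (F : set_system (splitI R n)) (x : unitI R) (i : 'I_n) :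
  Filter F -> val i = 1%N ->
  (forall c, val x < c -> F [set q | val x < val q.1 < c]) -> F --> ((x, i) : splitI R n).
Proof.
move=> FF i1 Fx; apply: cvg_split_basic => B bB Bp.
by have [c xc /filterS] := split_basic_right bB Bp i1; apply; exact: Fx.
Qed.

Lemma split_compact : (1 < n)%N -> compact [set: splitI R n].
Proof.
move=> n_gt1; rewrite compact_ultra => U UU _.
have [x x01 Ux] := ultra_cvg_itv (f := fun q : splitI R n => val q.1) UU (fun q => valP q.1).
pose xI : unitI R := exist _ x x01.
have above c : c < x -> U [set q | c < val q.1] := fun cx => Ux _ (lt_nbhsr cx).
have below c : x < c -> U [set q | val q.1 < c] := fun xc => Ux _ (lt_nbhsl xc).
case: (in_ultra_setVsetC [set q : splitI R n | val q.1 < x] UU) => [Ult|Unlt].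
  exists (xI, Ordinal (ltnW n_gt1)); split=> //; apply: cvg_split_left => // c cx.
  by apply: filterS (filterI (above c cx) Ult) => q [/= -> ->].
case: (in_ultra_setVsetC [set q : splitI R n | x < val q.1] UU) => [Ugt|Ungt].
  exists (xI, Ordinal n_gt1); split=> //; apply: cvg_split_right => // c xc.
  by apply: filterS (filterI Ugt (below c xc)) => q [/= -> ->].
have [i Ui] := ultra_fiber snd UU.
exists (xI, i); split=> //; apply: cvg_set1.
apply: filterS (filterI (filterI Unlt Ungt) Ui) => -[y j] [[/negP yx /negP xy] /= ->].
by congr pair; apply: val_inj; apply/eqP; rewrite eq_le !leNgt yx xy.
Qed.

End SplitInterval.

Theorem mainTheorem4 (R : realType) (n : nat) (hn : (2 <= n)%N) :
  compact [set: splitI R n] /\ hausdorff_space (splitI R n).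
Proof. by split; [exact: split_compact | exact: split_hausdorff]. Qed.
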